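(* Let $K$ be a field of characteristic $0$, $r\ge1$ an integer, $d$ the derivation of $K[a]$ with $d(a)=a^r$, and let $A=K[a][b;d]$ be the Ore extension, so $pb=bp+d(p)$ for $p\in K[a]$ (in particular $ab=ba+a^r$). Let $w=a$, which is normal, with associated automorphism $\sigma$ ($wy=\sigma(y)w$ for all $y\in A$) given by $\sigma(a)=a$, $\sigma(b)=b+a^{r-1}$. Let $J=A(a-1)$ and $x=b-1$, and $N=A/Ax$. Then: (a) $J$ is a maximal left ideal of $A$, and for every $m\ge 0$ there is no $c\in A$ with $\sigma^m(x)c-1\in J$; (b) $N$ is not artinian, and its nonzero submodules are exactly the modules $a^mN$, $m\ge0$, which form a strictly descending chain $N\supsetneq aN\supsetneq a^2N\supsetneq\cdots$; (c) the submodules $a^mN$ ($m\ge 0$) of $N$ are pairwise non-isomorphic. *)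

From HB Require Import structures.
From mathcomp Require Import all_boot all_order all_algebra.
Set Implicit Arguments. Unset Strict Implicit. Unset Printing Implicit Defensive.
Import Order.TTheory GRing.Theory Num.Theory.
Local Open Scope ring_scope.

(* The element  sum_j b^j p_j(a)  of A attached to p = sum_j p_j Y^j in K[a][Y]
   (coefficients p_j in K[a] = {poly K}, evaluated at a in the K-algebra A). *)
Definition ore_elt (K : fieldType) (A : algType K) (a b : A)
  (p : {poly {poly K}}) : A :=
  \sum_(j < size p) b ^+ j * horner_alg a p`_j.

(* A is the Ore extension K[a][b; d] with d(a) = a^r: A is a K-algebra in
   which a b = b a + a^r, and every element is uniquely of the form
   sum_j b^j p_j(a) with p_j in K[a]. *)
Definition is_ore_ext (K : fieldType) (r : nat) (A : algType K) (a b : A) :=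
  a * b = b * a + a ^+ r /\
  injective (ore_elt a b) /\ (forall y : A, exists p, y = ore_elt a b p).

Definition left_ideal (A : pzRingType) (I : A -> Prop) :=
  I 0 /\ (forall u v, I u -> I v -> I (u + v)) /\ (forall c u, I u -> I (c * u)).

Definition maximal_left_ideal (A : pzRingType) (I : A -> Prop) :=
  left_ideal I /\ ~ I 1 /\
  forall I' : A -> Prop, left_ideal I' -> (forall u, I u -> I' u) ->
    (forall u, I' u <-> I u) \/ (forall u, I' u).

Definition lprinc (A : pzRingType) (y : A) : A -> Prop :=
  fun u => exists c, u = c * y.

Definition submodule (A : pzRingType) (N : lmodType A) (S : N -> Prop) :=
  S 0 /\ (forall u v, S u -> S v -> S (u + v)) /\ (forall c u, S u -> S (c *: u)).

Definition artinian (A : pzRingType) (N : lmodType A) :=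
  forall C : nat -> N -> Prop, (forall k, submodule (C k)) ->
    (forall k u, C k.+1 u -> C k u) ->
    exists k0, forall k, (k0 <= k)%N -> forall u, C k u <-> C k0 u.

Definition smul_sub (A : pzRingType) (N : lmodType A) (y : A) : N -> Prop :=
  fun u => exists v, u = y *: v.

Definition submod_iso (A : pzRingType) (N : lmodType A) (S T : N -> Prop) :=
  exists f : N -> N,
    (forall u v, S u -> S v -> f (u + v) = f u + f v) /\
    (forall c u, S u -> f (c *: u) = c *: f u) /\
    (forall u, S u -> T (f u)) /\
    (forall u v, S u -> S v -> f u = f v -> u = v) /\
    (forall w, T w -> exists u, S u /\ f u = w).

(* N together with e (the class of 1) is the cyclic module A / A y *)
Definition is_quot_by (A : pzRingType) (N : lmodType A) (y : A) (e : N) :=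
  (forall n : N, exists c : A, n = c *: e) /\
  (forall c : A, c *: e = 0 <-> lprinc y c).

From HB Require Import structures.
From mathcomp Require Import all_boot all_order all_algebra.
Import Order.TTheory GRing.Theory Num.Theory.
Local Open Scope ring_scope.
From mathcomp Require Import zify.
From Stdlib Require Import Classical.
Set Implicit Arguments. Unset Strict Implicit.

(* Everything is reduced to polynomial computations through two normal forms.
   - Modulo J = A(a - 1): since a acts as 1 on A/J, every element of A is
     congruent to a polynomial g(b), uniquely (residue_mod_J, horner_b_in_J).  Left
     multiplication by p(a) acts on these residues as
     g |-> p(1) g + p'(1) g' + (terms of degree <= deg g - 2)
     (horner_a_action_low).  With p = X this lowers degrees, which gives
     inverses modulo J and the maximality of J; with p = X^(r-1) it computes
     sigma^m(x) = b - 1 + m a^(r-1) modulo J, and a leading-coefficient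
     argument shows it is never invertible modulo J.
   - In N = A/A(b - 1): every element is uniquely p(a)e (e the class of 1),
     and b acts by p |-> p - X^r p'.  A submodule therefore corresponds to an
     ideal of K[X] stable under p |-> X^r p'; its generator g divides X^r g',
     which forces g to be a monomial X^m: the submodule is a^m N.
   - An isomorphism a^m N -> a^n N maps a^m e into the kernel of
     sigma^m(x) = b - 1 + m a^(r-1), which is spanned by a^m e; hence
     a^m N and a^n N contain each other's generators, and m = n. *)

Section NormalForm.
Variables (K : fieldType) (A : algType K) (a b : A).

Local Notation pa := (horner_alg a).
Local Notation pb := (horner_alg b).
Local Notation oe := (ore_elt a b).

Lemma ore_elt_widen n (p : {poly {poly K}}) :
  (size p <= n)%N -> oe p = \sum_(j < n) b ^+ j * pa p`_j.
Proof.
move=> hn; rewrite /ore_elt (big_ord_widen n (fun j => b ^+ j * pa p`_j) hn).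
rewrite big_mkcond /=; apply: eq_bigr => i _.
case: ifP => // /negbT; rewrite -leqNgt => hi.
by rewrite nth_default // rmorph0 mulr0.
Qed.

Lemma ore_elt0 : oe 0 = 0.
Proof. by rewrite /ore_elt size_poly0 big_ord0. Qed.

Lemma ore_eltD (p q : {poly {poly K}}) : oe (p + q) = oe p + oe q.
Proof.
rewrite (@ore_elt_widen (maxn (size p) (size q)) p) ?leq_maxl //.
rewrite (@ore_elt_widen (maxn (size p) (size q)) q) ?leq_maxr //.
rewrite (@ore_elt_widen (maxn (size p) (size q))) ?size_polyD //.
by rewrite -big_split /=; apply: eq_bigr => i _; rewrite coefD rmorphD mulrDr.
Qed.

Lemma ore_eltN (p : {poly {poly K}}) : oe (- p) = - oe p.
Proof.
rewrite (@ore_elt_widen (size p)) ?size_polyN // /ore_elt -sumrN.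
by apply: eq_bigr => i _; rewrite coefN rmorphN mulrN.
Qed.

Lemma ore_eltC (s : {poly K}) : oe s%:P = pa s.
Proof.
rewrite (@ore_elt_widen 1) ?size_polyC ?leq_b1 //.
by rewrite big_ord1 coefC /= expr0 mul1r.
Qed.

Lemma ore_eltMr (p : {poly {poly K}}) (s : {poly K}) :
  oe (map_poly (fun q => q * s) p) = oe p * pa s.
Proof.
have hsize : (size (map_poly (fun q => q * s)%R p) <= size p)%N.
  by apply/leq_sizeP => j hj; rewrite coef_map_id0 ?mul0r // nth_default ?mul0r.
rewrite (ore_elt_widen hsize) /ore_elt mulr_suml; apply: eq_bigr => i _.
by rewrite coef_map_id0 ?mul0r // rmorphM mulrA.
Qed.

Lemma ore_eltMX (p : {poly {poly K}}) : oe (p * 'X) = b * oe p.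
Proof.
have hsize : (size (p * 'X)%R <= (size p).+1)%N.
  by apply/leq_sizeP => -[|j] hj; rewrite coefMX //= nth_default.
rewrite (ore_elt_widen hsize) big_ord_recl coefMX /= rmorph0 mulr0 add0r.
by rewrite /ore_elt mulr_sumr; apply: eq_bigr => i _; rewrite coefMX /= exprS mulrA.
Qed.

Lemma horner_alg_scale (x : A) (c : K) (h : {poly K}) :
  horner_alg x (c *: h) = c *: horner_alg x h.
Proof. by rewrite -mul_polyC rmorphM /= horner_algC mulr_algl. Qed.

Lemma horner_algXn (x : A) m : horner_alg x ('X ^+ m) = x ^+ m.
Proof. by rewrite rmorphXn /= horner_algX. Qed.

Lemma horner_b_commute (f : {poly K}) : pb f * b = b * pb f.
Proof.
have -> : pb f * b = pb (f * 'X) by rewrite rmorphM /= horner_algX.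
by rewrite mulrC rmorphM /= horner_algX.
Qed.

Lemma horner_b_ore_elt (f : {poly K}) : pb f = oe (map_poly polyC f).
Proof.
elim/poly_ind: f => [|f c IH]; first by rewrite !rmorph0 ore_elt0.
rewrite rmorphD rmorphM /= horner_algX horner_algC.
rewrite rmorphD rmorphM /= map_polyX map_polyC /= ore_eltD ore_eltMX ore_eltC.
by rewrite horner_algC -IH horner_b_commute.
Qed.

End NormalForm.

Section PrincipalLeftIdeal.
Variables (R : pzRingType) (y : R).
Local Notation I := (lprinc y).

Lemma lprinc0 : I 0. Proof. by exists 0; rewrite mul0r. Qed.

Lemma lprincD u v : I u -> I v -> I (u + v).
Proof. by move=> [c ->] [d ->]; exists (c + d); rewrite mulrDl. Qed.

Lemma lprincM c u : I u -> I (c * u).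
Proof. by move=> [d ->]; exists (c * d); rewrite mulrA. Qed.

Lemma lprincB u v : I u -> I v -> I (u - v).
Proof. by move=> hu hv; rewrite -mulN1r; apply/lprincD/lprincM. Qed.

Lemma lprinc_sum (T : finType) (F : T -> R) : (forall i, I (F i)) -> I (\sum_i F i).
Proof. by move=> hF; apply: (big_ind I) => //; [exact: lprinc0 | exact: lprincD]. Qed.

Lemma lprinc_left_ideal : left_ideal I.
Proof. by split; [exact: lprinc0 | split; [exact: lprincD | exact: lprincM]]. Qed.

End PrincipalLeftIdeal.

(* Two rearrangements of sums in an abelian group, used to split a
   difference into pieces that are each known to be small modulo J. *)
Section Regroup.
Variable V : zmodType.

Lemma sub_regroup3 (x1 x2 y1 y2 y3 z : V) :
  x1 + x2 - (y1 + (y2 + y3)) = (x1 - (y1 + y2)) + (x2 - (y3 + z)) + z.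
Proof.
rewrite !opprD !addrA -[RHS]addrA [- z + z]addrC subrr addr0.
rewrite -!addrA; congr (_ + _); rewrite !addrA; congr (_ + _).
by rewrite -addrA addrC.
Qed.

Lemma sub_regroup2 (x u y z w : V) :
  x - u + y - w - (x + (z - u) - w) = y - z.
Proof.
rewrite opprB addrA subrK opprD opprB addrACA [x - u - x]addrAC subrr add0r.
by rewrite addrCA addKr.
Qed.

End Regroup.

Section Polynomials.
Variable K : fieldType.

(* A nonzero set of polynomials closed under subtraction and multiplication
   (an ideal of K[X]) contains a nonzero element dividing all its elements:
   one of minimal size, by Euclidean division. *)
Lemma poly_ideal_generator (P : {poly K} -> Prop) :
  (forall p q, P p -> P q -> P (p - q)) -> (forall s p, P p -> P (s * p)) ->
  (exists2 p, P p & p != 0) ->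
  exists2 g, P g /\ g != 0 & forall p, P p -> g %| p.
Proof.
move=> PB PM [p0 hp0 p00].
have [g [hg g0 gmin]] : exists g, [/\ P g, g != 0 &
    forall p, P p -> p != 0 -> (size g <= size p)%N].
  elim: {p0}(size p0) {-2}p0 (leqnn (size p0)) hp0 p00 => [|n IH] q hs hq q0.
    by move: hs; rewrite size_poly_leq0 (negbTE q0).
  have [[q' [hq' q0' hs']]|hno] :=
    classic (exists q', [/\ P q', q' != 0 & (size q' <= n)%N]).
    exact: (IH q').
  exists q; split => // p hp p0; rewrite leqNgt; apply/negP => hlt.
  by apply: hno; exists p; split => //; rewrite -ltnS (leq_trans hlt hs).
exists g => // p hp; apply/modp_eq0P/eqP; apply: contraT => hne.
have hm : P (p %% g).
  have -> : p %% g = p - p %/ g * g by rewrite {2}(divp_eq p g) addrAC subrr add0r.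
  by apply: PB => //; apply: PM.
by have := gmin _ hm hne; rewrite leqNgt ltn_modp g0.
Qed.

(* A polynomial X f + h - 1 with deg h <= deg f is nonzero: for f = 0 it is
   -1, otherwise its coefficient of index size f is the leading one of f. *)
Lemma mulX_add_sub1_neq0 (f h : {poly K}) : (size h <= size f)%N ->
  'X * f + h - 1 != 0.
Proof.
move=> hs; apply/eqP => /(congr1 (fun P : {poly K} => P`_(size f))).
rewrite coefB coefD coefXM coef1 (nth_default 0 hs) addr0 coef0.
case e: (size f) => [|k] /=.
  by rewrite sub0r => /eqP; rewrite oppr_eq0 oner_eq0.
rewrite subr0 => hk; have : lead_coef f == 0 by rewrite lead_coefE e /= hk.
by rewrite lead_coef_eq0 => /eqP f0; move: e; rewrite f0 size_poly0.
Qed.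

End Polynomials.

Section CharacteristicZero.
Variable K : fieldType.
Hypothesis hK : [pchar K] =i pred0.

Lemma natr_neq0 n : (n != 0)%N -> (n%:R : K) != 0.
Proof. by move=> hn; rewrite ((pcharf0P K).1 hK n). Qed.

Lemma natr_sub_neq0 m i : m != i -> (m%:R - i%:R : K) != 0.
Proof.
move=> hmi; case: (leqP i m) => h.
  by rewrite -natrB // natr_neq0 // subn_eq0 -ltnNge ltn_neqAle eq_sym hmi h.
by rewrite -oppr_eq0 opprB -natrB ?natr_neq0 ?subn_eq0 -?ltnNge // ltnW.
Qed.

Lemma deriv_lead_neq0 (f : {poly K}) : (1 < size f)%N -> f^`()`_(size f).-2 != 0.
Proof.
move=> hs; have hS : ((size f).-2).+1 = (size f).-1.
  by move: hs; case: (size f) => [|[|k]].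
rewrite coef_deriv hS -mulr_natr; apply: mulf_neq0.
  by rewrite -lead_coefE lead_coef_eq0 -size_poly_gt0 (ltn_trans _ hs).
by apply: natr_neq0; rewrite -hS.
Qed.

Lemma deriv_eq0_size (f : {poly K}) : f^`() = 0 -> (size f <= 1)%N.
Proof.
by move=> hd; rewrite leqNgt; apply/negP => /deriv_lead_neq0; rewrite hd coef0 eqxx.
Qed.

Lemma euler_homogeneous m (q : {poly K}) : m%:R *: q = 'X * q^`() ->
  q = q`_m *: 'X ^+ m.
Proof.
move=> hq; apply/polyP => i; rewrite coefZ coefXn.
have [->|him] := eqVneq i m; first by rewrite mulr1.
rewrite mulr0; have := congr1 (fun P : {poly K} => P`_i) hq => /=.
rewrite coefZ coefXM; case: i him => [|i] him /=.
  have m0 : (m != 0)%N by rewrite eq_sym.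
  by move/eqP; rewrite mulf_eq0 (negbTE (natr_neq0 m0)) => /eqP.
rewrite coef_deriv => /eqP; rewrite -[_ *+ i.+1]mulr_natr -subr_eq0 mulrC -mulrBr.
have mi : m != i.+1 by rewrite eq_sym.
by rewrite mulf_eq0 (negbTE (natr_sub_neq0 mi)) orbF => /eqP.
Qed.

(* In characteristic 0, a polynomial dividing X^r g' is a monomial: writing
   g = X^m u with u(0) != 0, u divides X^r u', hence u' = 0. *)
Lemma divides_derivative_monomial r (g : {poly K}) : (0 < r)%N -> g != 0 ->
  g %| 'X ^+ r * g^`() -> exists m (c : K), c != 0 /\ g = c *: 'X ^+ m.
Proof.
move=> hr g0 hd; have [m [u hu eg]] := multiplicity_XsubC g 0.
rewrite g0 /= in hu; rewrite polyC0 subr0 in eg.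
have u0 : u != 0 by apply: contraNneq hu => ->; rewrite root0.
have Xm0 : 'X ^+ m != 0 :> {poly K} by rewrite expf_neq0 // polyX_eq0.
have ed : 'X ^+ r * g^`() = ('X ^+ r * u^`() + (u * 'X ^+ r.-1) *+ m) * 'X ^+ m.
  rewrite eg derivM derivXn mulrDr mulrDl mulrA; congr (_ + _).
  case: m {eg Xm0} => [|m]; first by rewrite !mulr0n !mulr0 mul0r.
  rewrite /= !mulrnAr mulrnAl; congr (_ *+ _).
  rewrite mulrCA -!mulrA -!exprD /=; congr (_ * _); congr (_ ^+ _).
  by rewrite addnS -addSn prednK.
rewrite ed eg dvdp_mul2r // dvdp_addl in hd; last by rewrite -mulrnAr dvdp_mulIl.
rewrite Gauss_dvdpr in hd; last first.
  by apply: coprimep_expr; have := coprimep_XsubC u 0; rewrite polyC0 subr0 => ->.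
have ud : u^`() = 0.
  apply/eqP; apply: contraT => hne.
  by have := dvdp_leq hne hd; rewrite leqNgt (lt_size_deriv u0).
have eu := size1_polyC (deriv_eq0_size ud); move: (u`_0) eu => c0 eu.
exists m, c0; split; last by rewrite eg eu mul_polyC.
by apply: contraNneq u0 => h0; rewrite eu h0 polyC0.
Qed.

End CharacteristicZero.

Section OreExtension.
Variables (K : fieldType) (r : nat) (A : algType K) (a b : A).
Hypothesis hK : [pchar K] =i pred0.
Hypothesis hr : (1 <= r)%N.
Hypothesis hab : a * b = b * a + a ^+ r.
Hypothesis hinj : injective (ore_elt a b).
Hypothesis hsurj : forall y : A, exists p, y = ore_elt a b p.

Local Notation pa := (horner_alg a).
Local Notation pb := (horner_alg b).
Local Notation oe := (ore_elt a b).
Local Notation J := (lprinc (a - 1)).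

Lemma horner_a_mulb (p : {poly K}) : pa p * b = b * pa p + pa ('X ^+ r * p^`()).
Proof.
have a_comm q : pa q * a ^+ r = a ^+ r * pa q.
  have -> : pa q * a ^+ r = pa (q * 'X ^+ r) by rewrite rmorphM /= horner_algXn.
  by rewrite mulrC rmorphM /= horner_algXn.
elim/poly_ind: p => [|p c IH].
  by rewrite !rmorph0 mul0r mulr0 deriv0 mulr0 rmorph0 addr0.
rewrite derivMXaddC !rmorphD !rmorphM /= horner_algX horner_algC rmorphXn /=.
rewrite horner_algX mulrDl -mulrA hab mulrDr mulrA IH mulrDl.
have -> : pa ('X ^+ r * p^`()) * a = a ^+ r * pa (p^`() * 'X).
  have <- : pa ('X ^+ r * p^`() * 'X) = pa ('X ^+ r * p^`()) * a.
    by rewrite rmorphM /= horner_algX.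
  by rewrite -mulrA rmorphM /= horner_algXn.
rewrite a_comm rmorphD mulrDr mulrDr (mulrA b) mulr_algl mulr_algr.
rewrite -!addrA; congr (_ + _).
by rewrite addrA [RHS]addrC; congr (_ + _); rewrite addrC.
Qed.

Lemma horner_a_sub1 : pa ('X - 1) = a - 1.
Proof. by rewrite rmorphB /= horner_algX rmorph1. Qed.

Lemma lprincZ (c : K) u : J u -> J (c *: u).
Proof. by rewrite -mulr_algl; apply: lprincM. Qed.

Lemma horner_a_mod_J (s : {poly K}) : J (pa s - (s.[1]) %:A).
Proof.
have hd : ('X - (1 : K)%:P) %| (s - (s.[1])%:P).
  by rewrite dvdp_XsubCl /root hornerD hornerN hornerC subrr.
exists (pa ((s - (s.[1])%:P) %/ ('X - (1 : K)%:P))).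
by rewrite -horner_a_sub1 -polyC1 -rmorphM /= divpK // rmorphB /= horner_algC.
Qed.

Lemma horner_b_in_J (f : {poly K}) : J (pb f) -> f = 0.
Proof.
move=> [c hc]; have [q hq] := hsurj c.
move: hc; rewrite hq -horner_a_sub1 -ore_eltMr (horner_b_ore_elt a) => /hinj hf.
apply/polyP => j; rewrite coef0.
have := congr1 (fun P : {poly {poly K}} => (P`_j).[1]) hf => /=.
rewrite coef_map /= coef_map_id0 ?mul0r // hornerC hornerM.
by rewrite hornerD hornerN hornerX hornerC subrr mulr0.
Qed.

Lemma residue_mod_J (y : A) : exists f, J (y - pb f).
Proof.
have [p ->] := hsurj y.
exists (\sum_(j < size p) (p`_j).[1] *: 'X^j).
rewrite rmorph_sum /ore_elt -sumrB; apply: lprinc_sum => j.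
rewrite -mul_polyC rmorphM /= horner_algC horner_algXn mulr_algl.
by rewrite -mulr_algr -mulrBr; apply/lprincM/horner_a_mod_J.
Qed.

(* [low_mod_J n y]: y is congruent modulo J to a polynomial in b of size at
   most n, i.e. of degree < n. *)
Definition low_mod_J n (y : A) :=
  exists h : {poly K}, (size h <= n)%N /\ J (y - pb h).

Lemma low_modD n y z : low_mod_J n y -> low_mod_J n z -> low_mod_J n (y + z).
Proof.
move=> [h1 [s1 j1]] [h2 [s2 j2]]; exists (h1 + h2); split.
  by rewrite (leq_trans (size_polyD _ _)) // geq_max s1 s2.
by rewrite rmorphD opprD addrACA; apply: lprincD.
Qed.

Lemma low_modZ n (c : K) y : low_mod_J n y -> low_mod_J n (c *: y).
Proof.
move=> [h [s1 j1]]; exists (c *: h); split.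
  by rewrite (leq_trans (size_scale_leq _ _)).
by rewrite horner_alg_scale -scalerBr; apply: lprincZ.
Qed.

Lemma low_mod_of_J n y : J y -> low_mod_J n y.
Proof. by move=> hy; exists 0; rewrite size_poly0 rmorph0 subr0. Qed.

Lemma low_mod_le n m y : (n <= m)%N -> low_mod_J n y -> low_mod_J m y.
Proof. by move=> hnm [h [s1 j1]]; exists h; split => //; apply: leq_trans hnm. Qed.

Lemma low_mod_horner n (h : {poly K}) : (size h <= n)%N -> low_mod_J n (pb h).
Proof. by move=> hs; exists h; split => //; rewrite subrr; apply: lprinc0. Qed.

Lemma low_modMb n y : low_mod_J n.-1 y -> low_mod_J n (b * y).
Proof.
move=> [h [s1 j1]].
have e : b * y - pb (h * 'X) = b * (y - pb h).
  by rewrite rmorphM /= horner_algX horner_b_commute mulrBr.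
case: n s1 => [|n] s1.
  apply: low_mod_of_J; move: s1; rewrite size_poly_leq0 => /eqP hh; move: j1.
  by rewrite hh rmorph0 subr0 => j1; apply: lprincM.
exists (h * 'X); split; last by rewrite e; apply: lprincM.
have [->|hn] := eqVneq h 0; first by rewrite mul0r size_poly0.
by rewrite size_mulX.
Qed.

(* Modulo J and lower-order terms, p(a) b^n = p(1) b^n + n p'(1) b^(n-1):
   each commutation of p(a) past b produces d(p) = X^r p', whose value at 1
   is p'(1). *)
Lemma horner_a_mul_bn n (p : {poly K}) :
  low_mod_J n.-1
    (pa p * b ^+ n - (p.[1] *: b ^+ n + (p^`().[1] * n%:R) *: b ^+ n.-1)).
Proof.
elim: n p => [|n IH] p.
  by rewrite mulr0 scale0r addr0 mulr1; apply/low_mod_of_J/horner_a_mod_J.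
set q := 'X ^+ r * p^`().
have commute_b : pa p * b ^+ n.+1 = b * (pa p * b ^+ n) + pa q * b ^+ n.
  by rewrite exprS mulrA horner_a_mulb mulrDl mulrA.
have q1 : q.[1] = p^`().[1] by rewrite hornerM hornerXn expr1n mul1r.
have bn : forall c : K, b * ((c * n%:R) *: b ^+ n.-1) = (c * n%:R) *: b ^+ n.
  by case: (n) => [|m] c; rewrite ?mulr0 ?scale0r ?mulr0 // -scalerAr -exprS.
have lower : low_mod_J n ((q^`().[1] * n%:R) *: b ^+ n.-1).
  case: (n) => [|m]; first by rewrite mulr0 scale0r; apply/low_mod_of_J/lprinc0.
  apply: low_modZ; rewrite -(horner_algXn b); apply: low_mod_horner.
  by rewrite size_polyXn.
have nS : p^`().[1] * n.+1%:R = p^`().[1] * n%:R + p^`().[1].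
  by rewrite -addn1 natrD mulrDr mulr1.
rewrite /= commute_b nS scalerDl.
rewrite (sub_regroup3 _ _ _ _ _ ((q^`().[1] * n%:R) *: b ^+ n.-1)).
apply: low_modD => //; apply: low_modD; last first.
  by rewrite -q1; apply: (low_mod_le (leq_pred n)); apply: IH.
have -> : b * (pa p * b ^+ n) - (p.[1] *: b ^+ n.+1 + (p^`().[1] * n%:R) *: b ^+ n) =
  b * (pa p * b ^+ n - (p.[1] *: b ^+ n + (p^`().[1] * n%:R) *: b ^+ n.-1)).
  by rewrite mulrBr mulrDr bn -scalerAr -exprS.
exact: low_modMb.
Qed.

(* The defect of the formula  p(a) g(b) = p(1) g(b) + p'(1) g'(b)  modulo J;
   it is linear in g and has degree at most deg g - 2. *)
Definition action_defect (p g : {poly K}) :=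
  pa p * pb g - pb (p.[1] *: g + p^`().[1] *: g^`()).

Lemma action_defect0 p : action_defect p 0 = 0.
Proof. by rewrite /action_defect deriv0 !scaler0 addr0 !rmorph0 mulr0 subr0. Qed.

Lemma action_defectD p g h :
  action_defect p (g + h) = action_defect p g + action_defect p h.
Proof.
rewrite /action_defect rmorphD mulrDr derivD !scalerDr addrACA rmorphD.
by rewrite opprD addrACA.
Qed.

Lemma action_defectZ p (c : K) g : action_defect p (c *: g) = c *: action_defect p g.
Proof.
rewrite /action_defect derivZ !scalerA [p.[1] * c]mulrC [p^`().[1] * c]mulrC.
by rewrite -!scalerA -scalerDr !horner_alg_scale scalerBr scalerAr.
Qed.

Lemma action_defectXn p i : action_defect p ('X ^+ i) =
  pa p * b ^+ i - (p.[1] *: b ^+ i + (p^`().[1] * i%:R) *: b ^+ i.-1).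
Proof.
rewrite /action_defect derivXn rmorphD /= !horner_alg_scale !rmorphXn /= rmorphMn /=.
by rewrite rmorphXn /= !horner_algX -scalerA scaler_nat.
Qed.

Lemma horner_a_action_low (p g : {poly K}) : low_mod_J (size g).-2 (action_defect p g).
Proof.
set n := size g; rewrite -[in action_defect p g](coefK g) poly_def.
apply: (big_ind (fun g => low_mod_J n.-2 (action_defect p g))).
- by rewrite action_defect0; apply/low_mod_of_J/lprinc0.
- by move=> g1 g2 h1 h2; rewrite action_defectD; apply: low_modD.
move=> i _; rewrite action_defectZ; apply: low_modZ; rewrite action_defectXn.
apply: (low_mod_le _ (horner_a_mul_bn i p)).
by have := ltn_ord i; lia.
Qed.

(* Modulo J, left multiplication by a - 1 acts on residues g(b) as
   g |-> g' + (lower terms): it lowers the degree by exactly one. *)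
Lemma sub1_lowers_degree (f : {poly K}) : (1 < size f)%N ->
  exists2 g : {poly K}, (size g < size f)%N /\ g != 0 & J ((a - 1) * pb f - pb g).
Proof.
move=> hs; have [h [sh jh]] := horner_a_action_low 'X f.
have hsize : ((size f).-2 < (size f).-1)%N by move: hs; case: (size f) => [|[|k]].
exists (f^`() + h); last first.
  have -> : (a - 1) * pb f - pb (f^`() + h) = action_defect 'X f - pb h.
    rewrite /action_defect horner_algX derivX hornerX hornerC !scale1r mulrBl mul1r.
    by rewrite !rmorphD /= !opprD !addrA.
  exact: jh.
have top : (f^`() + h)`_(size f).-2 = f^`()`_(size f).-2.
  by rewrite coefD (nth_default 0 sh) addr0.
split.
  rewrite (leq_ltn_trans (size_polyD _ _)) // gtn_max lt_size_deriv //=.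
    by rewrite (leq_ltn_trans sh) // (leq_trans hsize) // leq_pred.
  by rewrite -size_poly_gt0 (ltn_trans _ hs).
by apply: contraTneq (deriv_lead_neq0 hK hs) => g0; rewrite -top g0 coef0 eqxx.
Qed.

Lemma left_inverse_mod_J n (f : {poly K}) : (size f <= n)%N -> f != 0 ->
  exists c, J (c * pb f - 1).
Proof.
elim: n f => [|n IH] f hs hf; first by move: hs; rewrite size_poly_leq0 (negbTE hf).
have [hs1|hs2] := leqP (size f) 1.
  have hf0 : f`_0 != 0.
    by apply: contraNneq hf => h0; rewrite (size1_polyC hs1) h0 polyC0.
  exists ((f`_0)^-1)%:A; rewrite [in pb f](size1_polyC hs1) horner_algC.
  by rewrite -scalerAl mul1r scalerA mulVf // scale1r subrr; apply: lprinc0.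
have [g [hgs g0] hg] := sub1_lowers_degree hs2.
have [c hc] := IH g (leq_trans hgs hs) g0.
exists (c * (a - 1)).
have -> : c * (a - 1) * pb f - 1 = c * ((a - 1) * pb f - pb g) + (c * pb g - 1).
  by rewrite -mulrA mulrBr addrA subrK.
by apply: lprincD => //; apply: lprincM.
Qed.

Lemma J_maximal : maximal_left_ideal J.
Proof.
split; first exact: lprinc_left_ideal.
split.
  move=> h1; have : J (pb 1) by rewrite rmorph1.
  by move/horner_b_in_J/eqP; rewrite oner_eq0.
move=> I' [I0 [ID IM]] hJI.
have [[u [hu nu]]|hno] := classic (exists u, I' u /\ ~ J u); last first.
  by left=> v; split => [hv|]; [apply: NNPP => nv; apply: hno; exists v | exact: hJI].
right; have [f hf] := residue_mod_J u.
have f0 : f != 0.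
  by apply/eqP => f0; apply: nu; move: hf; rewrite f0 rmorph0 subr0.
have [c hc] := left_inverse_mod_J (leqnn (size f)) f0.
have cu1 : I' (c * u - 1).
  apply: hJI; have -> : c * u - 1 = c * (u - pb f) + (c * pb f - 1).
    by rewrite mulrBr addrA subrK.
  by apply: lprincD => //; apply: lprincM.
have i1 : I' 1.
  have -> : (1 : A) = c * u + (-1) * (c * u - 1) by rewrite mulN1r opprB addrC subrK.
  by apply: ID; apply: IM.
by move=> v; rewrite -[v]mulr1; apply: IM.
Qed.

(* a is right regular: y a has the normal form of y with each coefficient
   multiplied by X. *)
Lemma mulIa y z : y * a = z * a -> y = z.
Proof.
move=> e; apply/eqP; rewrite -subr_eq0; apply/eqP.
have [p hp] := hsurj (y - z).
have h0 : oe (map_poly (fun q => q * 'X) p) = oe 0.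
  by rewrite ore_eltMr horner_algX -hp mulrBl e subrr ore_elt0.
suff p0 : p = 0 by rewrite hp p0 ore_elt0.
apply/polyP => j; have := congr1 (fun P : {poly {poly K}} => P`_j) (hinj h0) => /=.
rewrite coef_map_id0 ?mul0r // coef0 => /eqP; rewrite mulf_eq0 polyX_eq0 orbF.
by move/eqP.
Qed.

Variable sigma : A -> A.
Hypothesis hsigma : forall y : A, a * y = sigma y * a.

(* sigma^m(x) = x + m a^(r-1): from a b = (b + a^(r-1)) a, the element
   x + (m+1) a^(r-1) satisfies the defining equation of sigma(x + m a^(r-1)),
   and a is right regular. *)
Lemma sigma_iter_x m : iter m sigma (b - 1) = b - 1 + m%:R * a ^+ r.-1.
Proof.
have ta : a * a ^+ r.-1 = a ^+ r by rewrite -exprS prednK.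
have at' : a ^+ r.-1 * a = a ^+ r by rewrite -exprSr prednK.
elim: m => [|m IH]; first by rewrite mul0r addr0.
apply: mulIa; rewrite /= -hsigma IH mulrDr mulrBr mulr1 hab.
rewrite mulrA (commr_nat a m) -mulrA ta.
rewrite !mulrDl mulN1r -mulrA at' -addn1 natrD mulrDl mul1r.
by rewrite -!addrA; congr (_ + _); rewrite addrCA; congr (_ + _); rewrite addrC.
Qed.

(* Modulo J, sigma^m(x) g(b) - 1 is a nonzero polynomial in b: by the action
   formula with p = X^(r-1) it is  (X - 1) g - 1 + m (g + (r-1) g' + lower),
   whose coefficient of index deg g + 1 is the leading coefficient of g. *)
Lemma sigma_x_residue m (f : {poly K}) :
  exists2 G : {poly K}, G != 0 & J ((b - 1 + m%:R * a ^+ r.-1) * pb f - 1 - pb G).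
Proof.
set p : {poly K} := 'X ^+ r.-1.
have [h [sh jh]] := horner_a_action_low p f.
set T := p.[1] *: f + p^`().[1] *: f^`().
set G := 'X * f + (m%:R *: (T + h) - f) - 1.
exists G.
  rewrite mulX_add_sub1_neq0 //; apply/leq_sizeP => i hi.
  have f0 j : (size f <= j)%N -> f`_j = 0 by move=> hj; rewrite nth_default.
  have h0 : h`_i = 0.
    by rewrite nth_default // (leq_trans _ hi) // (leq_trans sh) // -subn2 leq_subr.
  rewrite !(coefB, coefD, coefZ) coef_deriv h0 !f0 ?(leq_trans hi) //.
  by rewrite mul0rn !(mulr0, addr0, subr0).
have -> : (b - 1 + m%:R * a ^+ r.-1) * pb f - 1 - pb G =
    m%:R *: (action_defect p f - pb h).
  have pa_p : pa p = a ^+ r.-1 by rewrite horner_algXn.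
  rewrite /action_defect pa_p /G /T !rmorphD !rmorphN /= rmorph1 rmorphM /= horner_algX.
  rewrite !horner_alg_scale !mulrDl mulN1r -mulrA sub_regroup2.
  by rewrite !rmorphD /= !horner_alg_scale mulr_natl -scaler_nat -scalerBr opprD addrA.
exact: lprincZ.
Qed.

Lemma no_inverse_mod_J m : ~ exists c, J (iter m sigma (b - 1) * c - 1).
Proof.
move=> [c hc]; rewrite sigma_iter_x in hc.
set x := b - 1 + m%:R * a ^+ r.-1 in hc.
have [f hf] := residue_mod_J c; have [G G0 hG] := sigma_x_residue m f.
have : J (pb G).
  have e1 : x * c - 1 - x * (c - pb f) = x * pb f - 1.
    by rewrite mulrBr opprB addrC addrA subrK.
  have -> : pb G = (x * c - 1 - x * (c - pb f)) - (x * pb f - 1 - pb G).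
    by rewrite e1 opprB addrC subrK.
  by apply: lprincB; [apply: lprincB => //; apply: lprincM | exact: hG].
by move/horner_b_in_J/eqP; rewrite (negbTE G0).
Qed.

(* a is normal: A a = a A, since b a = a (b - a^(r-1)). *)
Lemma normal_a c : exists c', a * c' = c * a.
Proof.
pose P x := exists c', a * c' = x * a.
have PM x y : P x -> P y -> P (x * y).
  by move=> [x' hx] [y' hy]; exists (x' * y'); rewrite mulrA hx -mulrA hy mulrA.
have Pb : P b.
  by exists (b - a ^+ r.-1); rewrite mulrBr hab -exprS prednK // addrK.
have Pbj j : P (b ^+ j).
  elim: j => [|j IH]; first by exists 1; rewrite mulr1 expr0 mul1r.
  by rewrite exprS; apply: PM.
have Ppa s : P (pa s).
  exists (pa s); have -> : a * pa s = pa ('X * s) by rewrite rmorphM /= horner_algX.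
  by rewrite mulrC rmorphM /= horner_algX.
have [p ->] := hsurj c; rewrite /ore_elt; apply: (big_ind P).
- by exists 0; rewrite mulr0 mul0r.
- by move=> x y [x' hx] [y' hy]; exists (x' + y'); rewrite mulrDr mulrDl hx hy.
by move=> j _; apply: PM.
Qed.

Lemma normal_a_pow m c : exists c', a ^+ m * c' = c * a ^+ m.
Proof.
elim: m c => [|m IH] c; first by exists c; rewrite expr0 mulr1 mul1r.
have [c1 h1] := IH c; have [c2 h2] := normal_a c1.
by exists c2; rewrite exprSr -mulrA h2 mulrA h1 mulrA.
Qed.

Lemma sigma_iter_comm m y : a ^+ m * y = iter m sigma y * a ^+ m.
Proof.
elim: m y => [|m IH] y; first by rewrite expr0 mul1r mulr1.
by rewrite exprS -mulrA IH mulrA hsigma /= -mulrA -exprS.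
Qed.

Lemma ore_eltMb (q : {poly {poly K}}) :
  oe q * b = oe (q * 'X + map_poly (fun s : {poly K} => 'X ^+ r * s^`()) q).
Proof.
rewrite ore_eltD ore_eltMX.
have hsize : (size (map_poly (fun s : {poly K} => ('X ^+ r * s^`())%R) q) <= size q)%N.
  apply/leq_sizeP => j hj; rewrite coef_map_id0 ?deriv0 ?mulr0 //.
  by rewrite nth_default // deriv0 mulr0.
rewrite (ore_elt_widen a b hsize) /ore_elt mulr_suml mulr_sumr -big_split /=.
apply: eq_bigr => i _; rewrite coef_map_id0 ?deriv0 ?mulr0 // -mulrA.
by rewrite horner_a_mulb mulrDr mulrA -exprSr exprS mulrA.
Qed.

Variables (N : lmodType A) (e : N).
Hypothesis hN : is_quot_by (b - 1) e.

Local Notation pe p := (pa p *: e).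

Lemma b_fixes_e : b *: e = e.
Proof.
have : (b - 1) *: e = 0 by apply/(hN.2 (b - 1)); exists 1; rewrite mul1r.
by rewrite scalerBl scale1r => /eqP; rewrite subr_eq0 => /eqP.
Qed.

Lemma horner_eB p q : pe (p - q) = pe p - pe q.
Proof. by rewrite rmorphB scalerBl. Qed.

Lemma horner_eM (s p : {poly K}) : pa s *: pe p = pe (s * p).
Proof. by rewrite scalerA rmorphM. Qed.

Lemma b_action p : b *: pe p = pe (p - 'X ^+ r * p^`()).
Proof.
have hc : b * pa p = pa p * b - pa ('X ^+ r * p^`()) by rewrite horner_a_mulb addrK.
by rewrite scalerA hc scalerBl -scalerA b_fixes_e horner_eB.
Qed.

Lemma module_elt (u : N) : exists p, u = pe p.
Proof.
have [c ->] := hN.1 u; have [q ->] := hsurj c.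
rewrite /ore_elt scaler_suml; apply: (big_ind (fun u => exists p, u = pe p)).
- by exists 0; rewrite rmorph0 scale0r.
- by move=> x y [p1 ->] [p2 ->]; exists (p1 + p2); rewrite rmorphD scalerDl.
move=> j _; rewrite -scalerA; move: (q`_j) => p0.
elim: (nat_of_ord j) => [|k [p2 hp2]]; first by exists p0; rewrite expr0 scale1r.
by exists (p2 - 'X ^+ r * p2^`()); rewrite exprS -scalerA hp2 b_action.
Qed.

(* ... and p |-> p(a)e is injective: (b - 1) c is never a nonzero constant
   polynomial in a, comparing top b-coefficients of normal forms. *)
Lemma horner_e_eq0 p : pe p = 0 -> p = 0.
Proof.
move/(hN.2 _) => [c hc]; have [q hq] := hsurj c.
have e1 : oe p%:P =
    oe (q * 'X + map_poly (fun s : {poly K} => ('X ^+ r * s^`())%R) q - q).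
  by rewrite ore_eltC hc hq mulrBr mulr1 ore_eltMb [RHS]ore_eltD ore_eltN.
have /(congr1 (fun P : {poly {poly K}} => P`_(size q))) := hinj e1.
rewrite coefC !(coefB, coefD) coefMX coef_map_id0 ?deriv0 ?mulr0 //.
rewrite !(nth_default 0 (leqnn (size q))) deriv0 mulr0 addr0 subr0.
case es: (size q) => [|k] //= h0.
have : lead_coef q == 0 by rewrite lead_coefE es /= -h0.
by rewrite lead_coef_eq0 => /eqP hq0; move: es; rewrite hq0 size_poly0.
Qed.

Lemma power_submodule m : submodule (smul_sub (a ^+ m) : N -> Prop).
Proof.
split; first by exists 0; rewrite scaler0.
split; first by move=> u v [x ->] [y ->]; exists (x + y); rewrite scalerDr.
move=> c u [v ->]; have [c' hc'] := normal_a_pow m c.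
by exists (c' *: v); rewrite scalerA -hc' scalerA.
Qed.

Lemma power_descending m (u : N) : smul_sub (a ^+ m.+1) u -> smul_sub (a ^+ m) u.
Proof. by move=> [v ->]; exists (a *: v); rewrite exprSr scalerA. Qed.

Lemma power_descending_le k m (u : N) :
  (k <= m)%N -> smul_sub (a ^+ m) u -> smul_sub (a ^+ k) u.
Proof.
move=> hkm; rewrite -(subnK hkm); elim: (m - k)%N u => [|d IH] u; first by rewrite add0n.
by rewrite addSn => /power_descending /IH.
Qed.

Lemma power_gen_strict m : ~ smul_sub (a ^+ m.+1) (a ^+ m *: e).
Proof.
move=> [v hv]; have [q hq] := module_elt v.
move: hv; rewrite hq -(horner_algXn a m.+1) -(horner_algXn a m) horner_eM.
move=> /eqP; rewrite -subr_eq0 -horner_eB.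
move=> /eqP /horner_e_eq0 /eqP; rewrite subr_eq0 => /eqP.
move=> /(congr1 (fun P : {poly K} => P`_m)).
by rewrite coefXn coefXnM ltnSn eqxx => /eqP; rewrite oner_eq0.
Qed.

Lemma power_gen_in m n : smul_sub (a ^+ n) (a ^+ m *: e) -> (n <= m)%N.
Proof.
by rewrite leqNgt => hn; apply/negP => /power_descending_le/(_ hn)/power_gen_strict.
Qed.

Lemma power_gen_neq0 m : a ^+ m *: e != 0.
Proof.
rewrite -(horner_algXn a m); apply/eqP => /horner_e_eq0 /eqP; apply/negP.
by rewrite expf_neq0 // polyX_eq0.
Qed.

(* Elements of a^m N are multiples c a^m e, as a^m c' = sigma^m(c') a^m. *)
Lemma power_elt m (u : N) : smul_sub (a ^+ m) u -> exists c, u = c *: (a ^+ m *: e).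
Proof.
move=> [v ->]; have [c ->] := hN.1 v.
by exists (iter m sigma c); rewrite !scalerA sigma_iter_comm.
Qed.

(* Part (b): a nonzero submodule S corresponds to the ideal {p | p(a)e \in S}
   of K[X], which is stable under p |-> X^r p' (the action of 1 - b); its
   generator is a monomial X^m, so S = a^m N. *)
Lemma submodule_is_power (S : N -> Prop) : submodule S -> (exists u, S u /\ u <> 0) ->
  exists m, forall u, S u <-> smul_sub (a ^+ m) u.
Proof.
move=> [S0 [SD SZ]] [u [hu u0]].
pose I p := S (pe p).
have IB p q : I p -> I q -> I (p - q).
  by move=> hp hq; rewrite /I horner_eB -scaleN1r; apply: (SD) => //; apply: (SZ).
have IM s p : I p -> I (s * p) by move=> hp; rewrite /I -horner_eM; apply: (SZ).
have [g [hg g0] gdiv] : exists2 g, I g /\ g != 0 & forall p, I p -> g %| p.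
  apply: poly_ideal_generator => //; have [p hp] := module_elt u.
  exists p; first by rewrite /I -hp.
  by apply/eqP => p0; apply: u0; rewrite hp p0 rmorph0 scale0r.
have hD : I ('X ^+ r * g^`()).
  have e1 : pe ('X ^+ r * g^`()) = pe g + (-1) *: (b *: pe g).
    by rewrite b_action horner_eB scaleN1r opprB addrC subrK.
  by rewrite /I e1; apply: (SD) => //; apply: (SZ); apply: (SZ).
have [m [c [c0 eg]]] := divides_derivative_monomial hK hr g0 (gdiv _ hD).
exists m => v; split.
  move=> hv; have [p hp] := module_elt v.
  have : g %| p by apply: gdiv; rewrite /I -hp.
  rewrite eg dvdpZl // => /divpK ep.
  by exists (pe (p %/ 'X ^+ m)); rewrite hp -{1}ep mulrC -horner_eM horner_algXn.
move=> [w ->]; have [c1 ->] := hN.1 w.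
rewrite scalerA sigma_iter_comm -scalerA; apply: (SZ).
have -> : a ^+ m *: e = (c^-1)%:A *: pe g.
  rewrite scalerA mulr_algl -horner_alg_scale eg scalerA mulVf // scale1r.
  by rewrite horner_algXn.
by apply: (SZ).
Qed.

(* sigma^m(x) = b - 1 + m a^(r-1) annihilates a^m e, since
   sigma^m(x) a^m = a^m x and x e = 0. *)
Lemma sigma_x_kills m : (b - 1 + m%:R * a ^+ r.-1) *: (a ^+ m *: e) = 0.
Proof.
rewrite scalerA -sigma_iter_x -sigma_iter_comm -scalerA.
have -> : (b - 1) *: e = 0 by apply/(hN.2 (b - 1)); exists 1; rewrite mul1r.
by rewrite scaler0.
Qed.

(* Conversely the kernel of sigma^m(x) on N is K a^m e: on K[a]e it acts as
   q |-> m X^(r-1) q - X^r q', and X q' = m q forces q = c X^m. *)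
Lemma sigma_x_kernel m (u : N) : (b - 1 + m%:R * a ^+ r.-1) *: u = 0 ->
  exists c : K, u = c%:A *: (a ^+ m *: e).
Proof.
have [q ->] := module_elt u.
have act : (b - 1 + m%:R * a ^+ r.-1) *: pe q =
    pe (m%:R *: ('X ^+ r.-1 * q) - 'X ^+ r * q^`()).
  have hm : (m%:R * a ^+ r.-1) *: pe q = pe (m%:R *: ('X ^+ r.-1 * q)).
    rewrite scalerA horner_alg_scale scaler_nat rmorphM /= horner_algXn.
    by rewrite -mulrA mulr_natl.
  rewrite !scalerDl scaleN1r b_action hm !horner_eB.
  by rewrite [pe q - _ - _]addrAC subrr add0r addrC.
rewrite act => /horner_e_eq0 /eqP; rewrite subr_eq0 => /eqP.
rewrite -{2}(prednK hr) exprS scalerAr ['X * _]mulrC -mulrA => /mulfI hq.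
have {}hq : m%:R *: q = 'X * q^`() by apply: hq; rewrite expf_neq0 // polyX_eq0.
exists q`_m; rewrite scalerA mulr_algl -(horner_algXn a m) -horner_alg_scale.
by rewrite -(euler_homogeneous hK hq).
Qed.

(* Part (c): an isomorphism f : a^m N -> a^n N sends a^m e to a nonzero
   element killed by sigma^m(x), i.e. to c a^m e with c != 0; so a^m e lies
   in a^n N, and a^n e = f(c' a^m e) = c' c a^m e lies in a^m N. *)
Lemma power_submodules_not_iso m n : m <> n ->
  ~ submod_iso (smul_sub (a ^+ m) : N -> Prop) (smul_sub (a ^+ n)).
Proof.
move=> mn [f [fD [fZ [fT [fI fS]]]]].
have [Sm0 [_ SmZ]] := power_submodule m; have [_ [_ SnZ]] := power_submodule n.
have gen k : smul_sub (a ^+ k) (a ^+ k *: e) by exists e.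
have f0 : f 0 = 0.
  by apply: (@addrI _ (f 0)); rewrite -fD // !addr0.
have [c hc] : exists c : K, f (a ^+ m *: e) = c%:A *: (a ^+ m *: e).
  by apply: sigma_x_kernel; rewrite -fZ ?gen // sigma_x_kills f0.
have c0 : c != 0.
  apply: contra_neq (power_gen_neq0 m) => c0; apply: (fI _ _ (gen m) Sm0).
  by rewrite hc c0 !scale0r f0.
apply: mn; apply/eqP; rewrite eqn_leq; apply/andP; split.
  have [u [hu fu]] := fS _ (gen n); have [c' hc'] := power_elt hu.
  apply: power_gen_in; rewrite -fu hc' fZ ?gen // hc.
  by apply: (SmZ); apply: (SmZ); apply: gen.
apply: power_gen_in.
have -> : a ^+ m *: e = (c^-1)%:A *: f (a ^+ m *: e).
  by rewrite hc scalerA mulr_algl [c^-1 *: _]scalerA mulVf // !scale1r.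
by apply: (SnZ); apply: fT.
Qed.

End OreExtension.

Theorem proposition3p5 (K : fieldType) (hK : [pchar K] =i pred0)
  (r : nat) (hr : (1 <= r)%N)
  (A : algType K) (a b : A) (hA : is_ore_ext r a b)
  (sigma : A -> A) (hsigma : forall y : A, a * y = sigma y * a)
  (N : lmodType A) (e : N) (hN : is_quot_by (b - 1) e) :
  let J := lprinc (a - 1) in
  let x := b - 1 in
  (* (a) *)
  (maximal_left_ideal J /\
   forall m : nat, ~ exists c : A, J (iter m sigma x * c - 1)) /\
  (* (b) *)
  (~ artinian N /\
   (forall S : N -> Prop, submodule S ->
      ((exists u, S u /\ u <> 0) <->
       exists m : nat, forall u, S u <-> smul_sub (a ^+ m) u)) /\
   (forall m : nat, submodule (smul_sub (a ^+ m) : N -> Prop)) /\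
   (forall m : nat,
      (forall u : N, smul_sub (a ^+ m.+1) u -> smul_sub (a ^+ m) u) /\
      exists u : N, smul_sub (a ^+ m) u /\ ~ smul_sub (a ^+ m.+1) u)) /\
  (* (c) *)
  (forall m n : nat, m <> n ->
     ~ submod_iso (smul_sub (a ^+ m) : N -> Prop) (smul_sub (a ^+ n))).
Proof.
move=> J x; case: hA => hab [hinj hsurj].
have gen m : smul_sub (a ^+ m) (a ^+ m *: e) by exists e.
have strict m := power_gen_strict hab hinj hsurj hN (m := m).
split; first split.
- exact: (J_maximal hK hr hab hinj hsurj).
- by move=> m; exact: (no_inverse_mod_J hr hab hinj hsurj hsigma).
split; last exact: (power_submodules_not_iso hK hr hab hinj hsurj hsigma hN).
split.
  move=> /(_ (fun k => smul_sub (a ^+ k))) [].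
  - exact: (power_submodule hr hab hsurj N).
  - exact: power_descending.
  by move=> k0 /(_ k0.+1 (leqnSn k0) (a ^+ k0 *: e)) [_ /(_ (gen k0)) /strict].
split.
  move=> S hS; split; first exact: (submodule_is_power hK hr hab hsurj hsigma hN hS).
  move=> [m hm]; exists (a ^+ m *: e); split; first exact/hm/gen.
  exact/eqP/(power_gen_neq0 hab hinj hsurj hN).
split; first exact: (power_submodule hr hab hsurj N).
by move=> m; split; [exact: power_descending | exists (a ^+ m *: e); split].
Qed.
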